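(* For every $M$ with $\frac12\le M<\frac34$, every deterministic semi-online algorithm with migration factor $M$ for scheduling on two hierarchical machines with known optimal makespan (bin stretching) has competitive ratio at least $2-M$.
   Context: Model (two hierarchical machines with migration, bin stretching). Jobs $1,2,\dots,n$ arrive one by one ($n$ unknown in advance). Job $j$ has a size $p_j>0$ and a grade of service (GoS) $g_j\in\{1,2\}$; a job of GoS $1$ may only be processed on machine $m_1$, a job of GoS $2$ may be processed on $m_1$ or on $m_2$. The load of a machine is the total size of its jobs, the makespan is the maximum load. When job $j$ arrives, the algorithm must assign it, and may migrate previously arrived jobs (respecting GoS) of total size at most $M\cdot p_j$ (migration factor $M$). Bin stretching: the optimal offline makespan of the complete input is known in advance to the algorithm (scaled to $1$). The competitive ratio is the supremum over inputs of (algorithm's makespan)/(optimal makespan). *)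

From Stdlib Require Import Reals Lra List.
Open Scope R_scope.

Inductive machine := M1 | M2.

Definition machine_eqb (a b : machine) : bool :=
  match a, b with M1, M1 | M2, M2 => true | _, _ => false end.

(** Grade of service: GoS1 jobs only on M1, GoS2 jobs on M1 or M2. *)
Inductive gos := GoS1 | GoS2.

Record job := Job { size : R; grade : gos }.

(** An assignment of a job sequence: job number i (0-based) goes to machine a i. *)
Definition assignment := nat -> machine.

Fixpoint load (I : list job) (a : assignment) (m : machine) : R :=
  match I with
  | nil => 0
  | j :: I' => (if machine_eqb (a O) m then size j else 0)
               + load I' (fun i => a (S i)) m
  end.

Definition makespan (I : list job) (a : assignment) : R :=
  Rmax (load I a M1) (load I a M2).

Definition feasible (I : list job) (a : assignment) : Prop :=
  forall i j, nth_error I i = Some j -> grade j = GoS1 -> a i = M1.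

Definition opt_is (I : list job) (c : R) : Prop :=
  (exists a, feasible I a /\ makespan I a <= c) /\
  (forall a, feasible I a -> c <= makespan I a).

Definition valid_input (I : list job) : Prop :=
  (forall j, In j I -> 0 < size j) /\ opt_is I 1.

Fixpoint migration (I : list job) (a b : assignment) : R :=
  match I with
  | nil => 0
  | j :: I' => (if machine_eqb (a O) (b O) then 0 else size j)
               + migration I' (fun i => a (S i)) (fun i => b (S i))
  end.

(** A deterministic semi-online algorithm (knowing OPT = 1): the assignment
    it maintains after having seen the prefix s is A s. *)
Definition algorithm := list job -> assignment.

Definition valid_alg (Mf : R) (A : algorithm) : Prop :=
  forall p j q, valid_input (p ++ j :: q) ->
    feasible (p ++ j :: nil) (A (p ++ j :: nil)) /\
    migration p (A p) (A (p ++ j :: nil)) <= Mf * size j.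

(* The adversary first sends a GoS1 job of size 1 - M - e and a GoS2 job x of size M + e.
   Any later job has size at most 1, so x is too large to ever be migrated: it stays where
   the algorithm put it.  If x is on m1, a GoS1 job of size M + e loads m1 with 1 + M + e
   (OPT = 1 by moving x to m2); if x is on m2, a GoS2 job of size 1 loads either m2 with
   1 + M + e or m1 with 2 - M - e (OPT = 1 by pairing the first two jobs). *)
From Stdlib Require Import Reals Lra List.
Open Scope R_scope.

Lemma machine_eqb_neq (m m' : machine) : m <> m' -> machine_eqb m m' = false.
Proof. destruct m, m'; intros H; try reflexivity; exfalso; apply H; reflexivity. Qed.

Lemma migration_nonneg (I : list job) (a b : assignment) :
  (forall j, In j I -> 0 <= size j) -> 0 <= migration I a b.
Proof.
  revert a b; induction I as [|j I IH]; intros a b Hpos; simpl; [lra|].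
  assert (0 <= size j) by (apply Hpos; left; reflexivity).
  assert (0 <= migration I (fun i => a (S i)) (fun i => b (S i)))
    by (apply IH; intros k Hk; apply Hpos; right; exact Hk).
  destruct (machine_eqb (a O) (b O)); lra.
Qed.

Lemma size_le_migration (I : list job) (a b : assignment) (i : nat) (j : job) :
  (forall k, In k I -> 0 <= size k) ->
  nth_error I i = Some j -> a i <> b i -> size j <= migration I a b.
Proof.
  revert a b i; induction I as [|k I IH]; intros a b [|i] Hpos Hi Hab;
    simpl in Hi; try discriminate.
  - injection Hi as <-; simpl; rewrite (machine_eqb_neq _ _ Hab).
    assert (0 <= migration I (fun i => a (S i)) (fun i => b (S i)))
      by (apply migration_nonneg; intros k' Hk'; apply Hpos; right; exact Hk').
    lra.
  - simpl.
    assert (size j <= migration I (fun i => a (S i)) (fun i => b (S i)))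
      by (apply (IH _ _ i); auto; intros k' Hk'; apply Hpos; right; exact Hk').
    assert (0 <= size k) by (apply Hpos; left; reflexivity).
    destruct (machine_eqb (a O) (b O)); lra.
Qed.

Lemma valid_alg_keeps_large_jobs {Mf : R} {A : algorithm} {p q : list job} {j k : job} {i : nat} :
  valid_alg Mf A -> valid_input (p ++ j :: q) ->
  nth_error p i = Some k -> Mf * size j < size k ->
  A (p ++ j :: nil) i = A p i.
Proof.
  intros HA HI Hi Hlarge.
  destruct (HA p j q HI) as [_ Hmig].
  assert (Hpos : forall k, In k p -> 0 <= size k).
  { intros k' Hk'; apply Rlt_le, (proj1 HI); apply in_or_app; left; exact Hk'. }
  destruct (A (p ++ j :: nil) i) eqn:E1, (A p i) eqn:E2; try reflexivity;
    assert (size k <= migration p (A p) (A (p ++ j :: nil)))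
      by (apply (size_le_migration _ _ _ i); [exact Hpos | exact Hi | congruence]);
    lra.
Qed.

Section Adversary.

Variables (Mf e : R).
Hypotheses (HM : 1/2 <= Mf) (He : 0 < e) (Hsmall : Mf + e < 1).

Definition adversary_prefix : list job :=
  Job (1 - Mf - e) GoS1 :: Job (Mf + e) GoS2 :: nil.

Definition input_big_on_M1 : list job := adversary_prefix ++ Job (Mf + e) GoS1 :: nil.
Definition input_big_on_M2 : list job := adversary_prefix ++ Job 1 GoS2 :: nil.

Lemma valid_input_big_on_M1 : valid_input input_big_on_M1.
Proof.
  split; [|split].
  - intros j [<-|[<-|[<-|[]]]]; simpl; lra.
  - exists (fun i => match i with 1%nat => M2 | _ => M1 end); split.
    + intros [|[|[|i]]] j Hi Hg; try reflexivity.
      injection Hi as <-; discriminate.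
    + unfold makespan; simpl; apply Rmax_lub; lra.
  - intros a Hf; unfold makespan.
    eapply Rle_trans; [|apply Rmax_l]; simpl.
    rewrite (Hf 0%nat (Job (1 - Mf - e) GoS1)), (Hf 2%nat (Job (Mf + e) GoS1));
      try reflexivity.
    destruct (a 1%nat); simpl; lra.
Qed.

Lemma valid_input_big_on_M2 : valid_input input_big_on_M2.
Proof.
  split; [|split].
  - intros j [<-|[<-|[<-|[]]]]; simpl; lra.
  - exists (fun i => match i with 2%nat => M2 | _ => M1 end); split.
    + intros [|[|[|i]]] j Hi Hg; try reflexivity.
      injection Hi as <-; discriminate.
    + unfold makespan; simpl; apply Rmax_lub; lra.
  - intros a Hf; unfold makespan; simpl.
    rewrite (Hf 0%nat (Job (1 - Mf - e) GoS1)) by reflexivity; simpl.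
    apply Rmax_Rle; destruct (a 1%nat), (a 2%nat); simpl; [left | left | left | right]; lra.
Qed.

Variables (A : algorithm).
Hypothesis (HA : valid_alg Mf A).

Lemma makespan_big_on_M1 :
  A adversary_prefix 1%nat = M1 ->
  2 - Mf - e <= makespan input_big_on_M1 (A input_big_on_M1).
Proof.
  intros Hx.
  assert (Hf : feasible input_big_on_M1 (A input_big_on_M1))
    by exact (proj1 (HA adversary_prefix (Job (Mf + e) GoS1) nil valid_input_big_on_M1)).
  assert (Hstay : A input_big_on_M1 1%nat = M1).
  { rewrite <- Hx; apply (valid_alg_keeps_large_jobs (q := nil) (k := Job (Mf + e) GoS2) HA
      valid_input_big_on_M1); [reflexivity | simpl; nra]. }
  set (a := A input_big_on_M1) in *; unfold makespan.
  eapply Rle_trans; [|apply Rmax_l]; simpl.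
  rewrite (Hf 0%nat (Job (1 - Mf - e) GoS1)), Hstay, (Hf 2%nat (Job (Mf + e) GoS1));
    try reflexivity.
  simpl; lra.
Qed.

Lemma makespan_big_on_M2 :
  A adversary_prefix 1%nat = M2 ->
  2 - Mf - e <= makespan input_big_on_M2 (A input_big_on_M2).
Proof.
  intros Hx.
  assert (Hf : feasible input_big_on_M2 (A input_big_on_M2))
    by exact (proj1 (HA adversary_prefix (Job 1 GoS2) nil valid_input_big_on_M2)).
  assert (Hstay : A input_big_on_M2 1%nat = M2).
  { rewrite <- Hx; apply (valid_alg_keeps_large_jobs (q := nil) (k := Job (Mf + e) GoS2) HA
      valid_input_big_on_M2); [reflexivity | simpl; lra]. }
  set (a := A input_big_on_M2) in *; unfold makespan; simpl.
  rewrite (Hf 0%nat (Job (1 - Mf - e) GoS1)), Hstay by reflexivity; simpl.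
  apply Rmax_Rle; destruct (a 2%nat); simpl; [left | right]; lra.
Qed.

End Adversary.

Theorem mainTheorem15 :
  forall (Mf : R), 1/2 <= Mf < 3/4 ->
  forall (A : algorithm), valid_alg Mf A ->
  forall eps : R, 0 < eps ->
  exists I : list job, valid_input I /\ 2 - Mf - eps <= makespan I (A I).
Proof.
  intros Mf HM A HA eps Heps.
  set (e := Rmin eps ((1 - Mf) / 2)).
  assert (He_eps : e <= eps) by apply Rmin_l.
  assert (He_small : Mf + e < 1) by (assert (e <= (1 - Mf) / 2) by apply Rmin_r; lra).
  assert (He : 0 < e) by (apply Rmin_glb_lt; lra).
  destruct (A (adversary_prefix Mf e) 1%nat) eqn:Hx.
  - exists (input_big_on_M1 Mf e); split.
    + apply valid_input_big_on_M1; lra.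
    + assert (H := makespan_big_on_M1 Mf e (proj1 HM) He He_small A HA Hx); lra.
  - exists (input_big_on_M2 Mf e); split.
    + apply valid_input_big_on_M2; lra.
    + assert (H := makespan_big_on_M2 Mf e (proj1 HM) He He_small A HA Hx); lra.
Qed.
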